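(* Let $G$ be a one-point union of cycles of order $p$, i.e. a graph obtained from a collection of cycles by identifying one vertex from each cycle into a single common vertex. Then $str(G)=p+2$.
   Context: For a graph $G$ of order $p$, a numbering of $G$ is a bijection $f:V(G)\to[1,p]$. The strength of a numbering $f$ is $str_f(G)=\max\{f(u)+f(v): uv\in E(G)\}$, and the strength of a graph $G$ with at least one edge is $str(G)=\min\{str_f(G): f \text{ a numbering of } G\}$. *)

From mathcomp Require Import all_boot.
Set Implicit Arguments. Unset Strict Implicit. Unset Printing Implicit Defensive.

(* A (simple) graph on a finite vertex type T is given by an adjacency
   relation e : rel T.  Its order is p = #|T|. *)

Definition is_numbering (T : finType) (f : T -> nat) : Prop :=
  injective f /\
  (forall x, 1 <= f x <= #|T|) /\
  (forall k, 1 <= k <= #|T| -> exists x, f x = k).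

Definition str_f (T : finType) (e : rel T) (f : T -> nat) : nat :=
  \max_(u : T) \max_(v : T | e u v) (f u + f v).

Definition is_strength (T : finType) (e : rel T) (s : nat) : Prop :=
  (exists f, is_numbering f /\ str_f e f = s) /\
  (forall f, is_numbering f -> s <= str_f e f).

(* Vertex None is the common (identified) vertex; vertex (i, j), j < n i - 1,
   is the j-th further vertex of the i-th cycle, which is
   None - (i,0) - (i,1) - ... - (i, n i - 2) - None. *)
Definition opuc_vertex {k : nat} (n : 'I_k -> nat) : finType :=
  option {i : 'I_k & 'I_(n i).-1}.

Definition opuc_adj {k : nat} (n : 'I_k -> nat) : rel (opuc_vertex n) :=
  fun x y =>
    match x, y with
    | None, None => false
    | None, Some b => (val (tagged b) == 0) || ((val (tagged b)).+1 == (n (tag b)).-1)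
    | Some a, None => (val (tagged a) == 0) || ((val (tagged a)).+1 == (n (tag a)).-1)
    | Some a, Some b =>
        (tag a == tag b) &&
        (((val (tagged a)).+1 == val (tagged b)) || ((val (tagged b)).+1 == val (tagged a)))
    end.

From mathcomp Require Import all_boot zify.
Set Implicit Arguments. Unset Strict Implicit.

(* Let G be a one-point union of cycles of order p.  Every vertex of G has two
   distinct neighbours, so in any numbering the vertex labelled p has a
   neighbour labelled at least 2, whence str(G) >= p + 2.  Conversely, give
   the hub the label 1 and list the remaining p - 1 vertices cycle after cycle,
   each cycle traversed as the path left after deleting the hub; labelling the
   t-th vertex of this list by 1 + zigzag t, where zigzag runs through
   m, 1, m-1, 2, m-2, ... (m = p - 1), any two consecutive vertices of the list
   get labels summing to at most p + 2, and edges at the hub sum to at most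
   p + 1.  Hence str(G) = p + 2. *)

Section Strength.
Variable T : finType.
Implicit Types (e : rel T) (f : T -> nat).

Lemma str_f_ge e f x y : e x y -> f x + f y <= str_f e f.
Proof.
move=> exy; apply: leq_trans (leq_bigmax x).
exact: (leq_bigmax_cond (F := fun v => f x + f v) y exy).
Qed.

Lemma str_f_le e f s : (forall x y, e x y -> f x + f y <= s) -> str_f e f <= s.
Proof. by move=> bnd; apply/bigmax_leqP => x _; apply/bigmax_leqP => y /bnd. Qed.

Lemma numbering_of_inj f :
  injective f -> (forall x, 1 <= f x <= #|T|) -> is_numbering f.
Proof.
move=> f_inj f_rng; split=> //; split=> // m m_rng.
have lt_pred x : (f x).-1 < #|T| by have := f_rng x; lia.
pose h x := Ordinal (lt_pred x).
have h_inj : injective h.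
  move=> x y /(congr1 val) /= fxy; apply: f_inj; have := f_rng x; have := f_rng y; lia.
have lt_m : m.-1 < #|T| by lia.
have /codomP [x /(congr1 val) /= hx] :=
  inj_card_onto h_inj (eq_leq (card_ord _)) (Ordinal lt_m).
by exists x; have := f_rng x; lia.
Qed.

(* If every vertex has two distinct neighbours, the vertex labelled |T|
   has a neighbour labelled at least 2, so every numbering has strength at
   least |T| + 2. *)
Lemma strength_lower_bound e f :
  0 < #|T| -> (forall x, exists u v, [/\ u != v, e x u & e x v]) ->
  is_numbering f -> #|T| + 2 <= str_f e f.
Proof.
move=> T_gt0 deg2 [f_inj [f_rng f_surj]].
have [x fx] := f_surj #|T| (ltac:(lia)).
have [u [v [uv xu xv]]] := deg2 x.
have fuv : f u != f v by apply: contra uv => /eqP /f_inj ->.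
have := str_f_ge f xu; have := str_f_ge f xv.
have := f_rng u; have := f_rng v; move: fuv; lia.
Qed.
End Strength.

Lemma numbering_comp (T U : finType) (h : U -> T) (f : T -> nat) :
  bijective h -> is_numbering f -> is_numbering (f \o h).
Proof.
move=> h_bij [f_inj [f_rng f_surj]]; rewrite /is_numbering (bij_eq_card h_bij).
case: (h_bij) => g hK gK; split; first exact: inj_comp (bij_inj h_bij).
split=> [u|m /f_surj [x fx]]; first exact: f_rng.
by exists (g x); rewrite /= gK.
Qed.

Lemma str_f_hom_le (T U : finType) (eT : rel T) (eU : rel U)
    (h : U -> T) (fT : T -> nat) (fU : U -> nat) :
  (forall u v, eU u v -> eT (h u) (h v)) -> (forall u, fU u = fT (h u)) ->
  str_f eU fU <= str_f eT fT.
Proof.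
move=> h_hom fUE; apply: str_f_le => u v /h_hom huv.
by rewrite !fUE; apply: str_f_ge.
Qed.

Lemma is_strength_iso (T U : finType) (eT : rel T) (eU : rel U) (phi : T -> U) s :
  bijective phi -> (forall x y, eT x y = eU (phi x) (phi y)) ->
  is_strength eU s -> is_strength eT s.
Proof.
move=> phi_bij phi_adj [[g [g_num g_str]] g_min].
case: (phi_bij) => psi phiK psiK.
have phi_hom x y : eT x y -> eU (phi x) (phi y) by rewrite phi_adj.
have psi_hom u v : eU u v -> eT (psi u) (psi v) by rewrite phi_adj !psiK.
have psi_bij : bijective psi by exists phi.
split=> [|f f_num].
  exists (g \o phi); split; first exact: numbering_comp.
  apply/eqP; rewrite eqn_leq -{1}g_str (str_f_hom_le (fU := g \o phi) phi_hom) //=.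
  by rewrite -g_str (str_f_hom_le (fT := g \o phi) psi_hom) // => u /=; rewrite psiK.
apply: leq_trans (g_min (f \o psi) (numbering_comp psi_bij f_num)) _.
exact: str_f_hom_le psi_hom _.
Qed.

(* The sequence m, 1, m-1, 2, m-2, ... : it enumerates [1, m] for t < m and
   alternates between large and small values, so that consecutive terms
   sum to at most m + 1. *)
Definition zigzag (m t : nat) : nat := if odd t then (t.+1)./2 else m - t./2.

Lemma zigzag_range m t : t < m -> 1 <= zigzag m t <= m.
Proof. by rewrite /zigzag; have := odd_double_half t; case: (odd t) => /=; lia. Qed.
Lemma zigzag_inj m t t' : t < m -> t' < m -> zigzag m t = zigzag m t' -> t = t'.
Proof.
rewrite /zigzag; have := odd_double_half t; have := odd_double_half t'.
by case: (odd t); case: (odd t') => /=; lia.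
Qed.
Lemma zigzag_consecutive m t : t.+1 < m -> zigzag m t + zigzag m t.+1 <= m.+1.
Proof. by rewrite /zigzag /=; have := odd_double_half t; case: (odd t) => /=; lia. Qed.

(* Laying out the sigma type {i : 'I_k & 'I_(s i)} as consecutive blocks of
   natural numbers: the block of i starts at s 0 + ... + s (i-1), and
   (i, j) is placed at position (start of block i) + j. *)
Section BlockLayout.
Variables (k : nat) (s : 'I_k -> nat).

(* block_size l is the size of the l-th block (0 past the last one). *)
Definition block_size (l : nat) : nat :=
  if insub l : option 'I_k is Some i then s i else 0.

Definition block_start (l : nat) : nat := \sum_(0 <= l' < l) block_size l'.

Definition block_pos (a : {i : 'I_k & 'I_(s i)}) : nat :=
  block_start (tag a) + tagged a.

Lemma block_start_succ (i : 'I_k) : block_start i.+1 = block_start i + s i.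
Proof. by rewrite /block_start big_nat_recr //= /block_size valK. Qed.

Lemma block_start_mono l l' : l <= l' -> block_start l <= block_start l'.
Proof.
move=> ll'; rewrite /block_start (@big_cat_nat _ _ _ l 0 l' _ _ (leq0n l) ll').
exact: leq_addr.
Qed.

Lemma block_start_end (i : 'I_k) l : i < l -> block_start i + s i <= block_start l.
Proof. by rewrite -block_start_succ; apply: block_start_mono. Qed.

Lemma block_start_total : block_start k = #|{: {i : 'I_k & 'I_(s i)}}|.
Proof.
rewrite card_tagged sumnE big_map big_enum /block_start big_mkord.
by apply: eq_bigr => i _; rewrite /block_size valK card_ord.
Qed.

Lemma block_pos_lt a : block_pos a < #|{: {i : 'I_k & 'I_(s i)}}|.
Proof.
case: a => i j; rewrite -block_start_total /block_pos /=.
by have := block_start_end (ltn_ord i); have := ltn_ord j; lia.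
Qed.

Lemma block_pos_inj : injective block_pos.
Proof.
move=> [i j] [i' j']; rewrite /block_pos /=.
have [lt_ii'|] := ltnP i i'.
  by have := block_start_end lt_ii'; have := ltn_ord j; lia.
rewrite leq_eqVlt => /orP [/eqP/val_inj eq_ii'|lt_i'i]; last first.
  by have := block_start_end lt_i'i; have := ltn_ord j'; lia.
by subst i' => pos_eq; congr existT; apply: val_inj => /=; lia.
Qed.
End BlockLayout.

Section OnePointUnion.
Variables (k : nat) (n : 'I_k -> nat).
Hypotheses (k_gt0 : 0 < k) (n_ge3 : forall i, 3 <= n i).

Let B := {i : 'I_k & 'I_(n i).-1}.
Let m := #|{: B}|.
Local Notation adj := (@opuc_adj k n).

Definition cycle_vertex (i : 'I_k) (j : 'I_(n i).-1) : opuc_vertex n :=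
  Some (Tagged (fun i => 'I_(n i).-1) j).

Let position (v : opuc_vertex n) : nat := if v is Some a then (val (tagged a)).+1 else 0.

Lemma opuc_card : #|{: opuc_vertex n}| = m.+1.
Proof. exact: card_option. Qed.

Lemma hub_two_neighbours :
  exists u v, [/\ u != v, adj None u & adj None v].
Proof.
pose i0 : 'I_k := Ordinal k_gt0.
have first_lt : 0 < (n i0).-1 by have := n_ge3 i0; lia.
have last_lt : (n i0).-2 < (n i0).-1 by have := n_ge3 i0; lia.
exists (cycle_vertex (Ordinal first_lt)), (cycle_vertex (Ordinal last_lt)); split=> //.
- by apply/eqP => /(congr1 position) /=; have := n_ge3 i0; lia.
- by apply/orP; right; apply/eqP => /=; have := n_ge3 i0; lia.
Qed.

Lemma cycle_two_neighbours (a : B) :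
  exists u v, [/\ u != v, adj (Some a) u & adj (Some a) v].
Proof.
case: a => i j; have n_i := n_ge3 i; have lt_j := ltn_ord j.
have prev_lt : j.-1 < (n i).-1 by apply: leq_ltn_trans (leq_pred j) lt_j.
have [next_lt|next_ge] := ltnP j.+1 (n i).-1.
  have [j0|j_gt0] := posnP j.
    exists None, (cycle_vertex (Ordinal next_lt)).
    by rewrite /= j0 eqxx /= eqxx.
  exists (cycle_vertex (Ordinal prev_lt)), (cycle_vertex (Ordinal next_lt)) => /=.
  split; first by apply/eqP => /(congr1 position) /=; lia.
  - by rewrite eqxx /=; apply/orP; right; apply/eqP; lia.
  - by rewrite eqxx /=; apply/orP; left; apply/eqP; lia.
exists (cycle_vertex (Ordinal prev_lt)), None => /=.
have j_gt0 : 0 < j by lia.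
by rewrite eqxx /=; split=> //; apply/orP; right; apply/eqP; lia.
Qed.

Lemma opuc_two_neighbours (v : opuc_vertex n) :
  exists u w, [/\ u != w, adj v u & adj v w].
Proof. by case: v => [a|]; [apply: cycle_two_neighbours | apply: hub_two_neighbours]. Qed.

Lemma adjacent_block_pos (a b : B) :
  adj (Some a) (Some b) ->
  block_pos b = (block_pos a).+1 \/ block_pos a = (block_pos b).+1.
Proof.
case: a b => [i j] [i' j'] /= /andP [/eqP eq_ii' consecutive]; subst i'.
by rewrite /block_pos /=; case/orP: consecutive => /eqP; lia.
Qed.

Definition zigzag_label (v : opuc_vertex n) : nat :=
  if v is Some a then (zigzag m (block_pos a)).+1 else 1.

Lemma zigzag_block_range (a : B) : 1 <= zigzag m (block_pos a) <= m.
Proof. exact: zigzag_range (block_pos_lt a). Qed.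

Lemma zigzag_block_consecutive (a b : B) :
  block_pos b = (block_pos a).+1 ->
  zigzag m (block_pos a) + zigzag m (block_pos b) <= m.+1.
Proof. by move=> pos_b; rewrite pos_b zigzag_consecutive // -pos_b block_pos_lt. Qed.

Lemma zigzag_label_numbering : is_numbering zigzag_label.
Proof.
apply: numbering_of_inj => [[a|] [b|] //=|[a|] //=]; rewrite ?opuc_card //.
- by move=> [] /zigzag_inj eq_ab; congr Some; apply/block_pos_inj/eq_ab; apply: block_pos_lt.
- by have := zigzag_block_range a; lia.
- by have := zigzag_block_range b; lia.
- by have := zigzag_block_range a; lia.
Qed.

(* Edges at the hub sum to at most m + 2 and other edges, joining
   consecutive positions, to at most m + 3 = p + 2. *)
Lemma zigzag_label_str : str_f adj zigzag_label <= #|{: opuc_vertex n}| + 2.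
Proof.
rewrite opuc_card; apply: str_f_le => -[a|] [b|] //= adj_ab.
- by case: (adjacent_block_pos adj_ab) => /zigzag_block_consecutive; lia.
- by have := zigzag_block_range a; lia.
- by have := zigzag_block_range b; lia.
Qed.

Lemma opuc_strength : is_strength adj (#|{: opuc_vertex n}| + 2).
Proof.
have lower f : is_numbering f -> #|{: opuc_vertex n}| + 2 <= str_f adj f.
  by apply: strength_lower_bound; [rewrite opuc_card | exact: opuc_two_neighbours].
split=> //; exists zigzag_label; split; first exact: zigzag_label_numbering.
by apply/eqP; rewrite eqn_leq zigzag_label_str lower //; exact: zigzag_label_numbering.
Qed.
End OnePointUnion.

Theorem mainTheorem4 (T : finType) (e : rel T) (k : nat) (n : 'I_k -> nat) :
  0 < k ->
  (forall i, 3 <= n i) ->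
  (exists phi : T -> opuc_vertex n,
      bijective phi /\ forall x y, e x y = @opuc_adj k n (phi x) (phi y)) ->
  is_strength e (#|T| + 2).
Proof.
move=> k_gt0 n_ge3 [phi [phi_bij phi_adj]].
rewrite (bij_eq_card phi_bij).
exact: is_strength_iso phi_bij phi_adj (opuc_strength k_gt0 n_ge3).
Qed.
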